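(* Let $q\in[1,\infty)$ and let $(X,d_X)$ be a $q$-barycentric metric space that contains a geodesic segment (an isometric copy of a nondegenerate interval of $\mathbb{R}$). Then $q\ge2$.
   Context: For $q\in[1,\infty)$, $\beta>0$, a metric space $(X,d_X)$ is $q$-barycentric with constant $\beta$ if there is a map $\mathfrak{B}$ from finitely supported probability measures on $X$ to $X$, with $\mathfrak{B}(\delta_x)=x$, such that $d_X(\mathfrak{B}(\mu),x)^q+\beta^{-q}\int_X d_X(\mathfrak{B}(\mu),y)^q\,d\mu(y)\le\int_X d_X(x,y)^q\,d\mu(y)$ for all $x\in X$ and finitely supported probability measures $\mu$; $q$-barycentric means this holds for some $\beta$. *)

From Stdlib Require Import Reals Lra List.
Import ListNotations.
Open Scope R_scope.

Definition rpow (t q : R) : R :=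
  if Req_EM_T t 0 then 0 else Rpower t q.

Definition is_metric {X : Type} (d : X -> X -> R) : Prop :=
  (forall x y, 0 <= d x y) /\
  (forall x y, d x y = 0 <-> x = y) /\
  (forall x y, d x y = d y x) /\
  (forall x y z, d x z <= d x y + d y z).

Definition sum_list {X : Type} (f : X -> R) (s : list X) : R :=
  fold_right (fun x acc => f x + acc) 0 s.

(* mu : X -> R is a finitely supported probability measure (given by its point
   masses), and s is a duplicate-free list containing its support.  Integrals
   against mu are sums over s. *)
Definition fs_prob_on {X : Type} (mu : X -> R) (s : list X) : Prop :=
  NoDup s /\
  (forall x, mu x <> 0 -> In x s) /\
  (forall x, 0 <= mu x) /\
  sum_list mu s = 1.

Definition is_fs_prob {X : Type} (mu : X -> R) : Prop :=
  exists s, fs_prob_on mu s.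

Definition is_dirac {X : Type} (x : X) (mu : X -> R) : Prop :=
  mu x = 1 /\ forall y, y <> x -> mu y = 0.

Definition q_barycentric_with {X : Type} (d : X -> X -> R) (q beta : R)
    (B : (X -> R) -> X) : Prop :=
  (forall x mu, is_dirac x mu -> B mu = x) /\
  (forall (mu : X -> R) (s : list X) (x : X), fs_prob_on mu s ->
     rpow (d (B mu) x) q
     + / rpow beta q * sum_list (fun y => mu y * rpow (d (B mu) y) q) s
     <= sum_list (fun y => mu y * rpow (d x y) q) s).

Definition q_barycentric {X : Type} (d : X -> X -> R) (q : R) : Prop :=
  exists beta, 0 < beta /\ exists B, q_barycentric_with d q beta B.

Definition has_geodesic_segment {X : Type} (d : X -> X -> R) : Prop :=
  exists (a b : R) (f : R -> X), a < b /\
    forall s t, a <= s <= b -> a <= t <= b -> d (f s) (f t) = Rabs (s - t).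

(* Test the barycentric inequality on the uniform measure on two points [m - k]
   and [m + k] of a geodesic segment of radius [L] around [m], with the two
   endpoints [m - L] and [m + L] as competitors.  Adding the two inequalities
   and using convexity of [t |-> t^q] on the left gives
   [2 L^q + 2 beta^-q k^q <= (L + k)^q + (L - k)^q].  For [q < 2] the right-hand
   side is [2 L^q + O(k^2)], so [beta^-q <= (k/L)^(2-q)], which fails as [k -> 0]. *)
From Stdlib Require Import Reals Lra List ClassicalDescription.
Import ListNotations.
Open Scope R_scope.

Lemma ln_le_sub1 x : 0 < x -> ln x <= x - 1.
Proof. intro Hx. pose proof (exp_ineq1_le (ln x)) as Hexp. rewrite exp_ln in Hexp; lra. Qed.

Lemma Rpower_pos x y : 0 < Rpower x y.
Proof. apply exp_pos. Qed.

Lemma Rpower_le_bernoulli y r :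
  0 < y -> 0 <= r <= 1 -> Rpower y r <= 1 + r * (y - 1).
Proof.
  intros Hy Hr. set (A := 1 + r * (y - 1)).
  assert (HA : 0 < A) by (unfold A; nra).
  (* weighted AM-GM: average [ln u <= u - 1] at [u = 1/A] and [u = y/A] *)
  assert (Hln : r * ln y <= ln A).
  { assert (HiA : 0 < / A) by (apply Rinv_0_lt_compat; lra).
    pose proof (ln_le_sub1 (/ A) HiA) as H1.
    pose proof (ln_le_sub1 (y * / A) (Rmult_lt_0_compat _ _ Hy HiA)) as H2.
    rewrite ln_Rinv in H1 by lra.
    rewrite ln_mult, ln_Rinv in H2 by lra.
    assert (A * / A = 1) by (field; lra).
    unfold A in *; nra. }
  unfold Rpower. rewrite <- (exp_ln A) by lra.
  destruct Hln as [Hlt | ->]; [left; apply exp_increasing, Hlt | right; reflexivity].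
Qed.

Lemma Rpower_ge_bernoulli y r :
  0 < y -> 1 <= r -> 1 + r * (y - 1) <= Rpower y r.
Proof.
  intros Hy Hr. set (z := Rpower y r).
  assert (Hzy : Rpower z (/ r) = y).
  { unfold z. rewrite Rpower_mult, Rinv_r by lra. apply Rpower_1, Hy. }
  assert (Hr' : 0 <= / r <= 1).
  { split; [left; apply Rinv_0_lt_compat; lra|].
    rewrite <- Rinv_1. apply Rinv_le_contravar; lra. }
  pose proof (Rpower_le_bernoulli z (/ r) (Rpower_pos _ _) Hr') as Hle.
  rewrite Hzy in Hle.
  assert (r * (y - 1) <= r * (/ r * (z - 1))) by (apply Rmult_le_compat_l; lra).
  replace (r * (/ r * (z - 1))) with (z - 1) in H by (field; lra).
  lra.
Qed.

Lemma rpow_Rpower t q : 0 < t -> rpow t q = Rpower t q.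
Proof. intros Ht. unfold rpow. destruct (Req_EM_T t 0); [lra | reflexivity]. Qed.

Lemma rpow_ge_tangent M t q : 0 < M -> 0 <= t -> 1 <= q ->
  Rpower M q * (1 + q * (t / M - 1)) <= rpow t q.
Proof.
  intros HM Ht Hq. pose proof (Rpower_pos M q).
  destruct (Req_dec t 0) as [-> | Ht0].
  - unfold rpow. destruct (Req_EM_T 0 0); [|congruence].
    unfold Rdiv. rewrite Rmult_0_l. nra.
  - assert (HtM : 0 < t / M) by (apply Rdiv_lt_0_compat; lra).
    rewrite rpow_Rpower by lra.
    replace t with (M * (t / M)) at 2 by (field; lra).
    rewrite <- Rpower_mult_distr by lra.
    apply Rmult_le_compat_l; [lra | apply Rpower_ge_bernoulli; lra].
Qed.

Lemma rpow_add_ge_2Rpower a b M q :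
  0 <= a -> 0 <= b -> 0 < M -> 2 * M <= a + b -> 1 <= q ->
  2 * Rpower M q <= rpow a q + rpow b q.
Proof.
  intros Ha Hb HM Hab Hq.
  pose proof (rpow_ge_tangent M a q HM Ha Hq).
  pose proof (rpow_ge_tangent M b q HM Hb Hq).
  pose proof (Rpower_pos M q).
  assert (2 <= a / M + b / M).
  { unfold Rdiv. rewrite <- Rmult_plus_distr_r. apply (Rmult_le_reg_r M); auto.
    rewrite Rmult_assoc, Rinv_l by lra. lra. }
  assert (0 <= Rpower M q * (q * (a / M + b / M - 2))).
  { apply Rmult_le_pos; [lra | apply Rmult_le_pos; lra]. }
  nra.
Qed.

Lemma Rpower_sym_sum_le x q : 0 < x < 1 -> 1 <= q <= 2 ->
  Rpower (1 + x) q + Rpower (1 - x) q <= 2 + 2 * (q - 1) * x ^ 2.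
Proof.
  intros Hx Hq.
  assert (Hsplit : forall y, 0 < y -> Rpower y q = y * Rpower y (q - 1)).
  { intros y Hy. rewrite <- (Rpower_1 y) at 2 by exact Hy.
    rewrite <- Rpower_plus. f_equal. ring. }
  rewrite !Hsplit by lra.
  pose proof (Rpower_le_bernoulli (1 + x) (q - 1) ltac:(lra) ltac:(lra)) as Hp.
  pose proof (Rpower_le_bernoulli (1 - x) (q - 1) ltac:(lra) ltac:(lra)) as Hm.
  pose proof (Rmult_le_compat_l (1 + x) _ _ ltac:(lra) Hp).
  pose proof (Rmult_le_compat_l (1 - x) _ _ ltac:(lra) Hm).
  nra.
Qed.

Lemma Rpower_inv_root y e : 0 < y < 1 -> 0 < e ->
  0 < Rpower y (/ e) < 1 /\ Rpower (Rpower y (/ e)) e = y.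
Proof.
  intros Hy He. split.
  - split; [apply Rpower_pos|].
    unfold Rpower. rewrite <- exp_0. apply exp_increasing.
    assert (ln y < 0) by (rewrite <- ln_1; apply ln_increasing; lra).
    assert (0 < / e) by (apply Rinv_0_lt_compat; lra).
    nra.
  - rewrite Rpower_mult, Rinv_l by lra. apply Rpower_1; lra.
Qed.

Section Barycentric.

Variables (X : Type) (d : X -> X -> R) (q beta : R) (B : (X -> R) -> X).
Hypothesis Hd : is_metric d.
Hypothesis HB : q_barycentric_with d q beta B.

Definition half_half (P P' : X) : X -> R := fun z =>
  if excluded_middle_informative (z = P) then 1 / 2
  else if excluded_middle_informative (z = P') then 1 / 2 else 0.

Lemma half_half_fs_prob P P' : P <> P' -> fs_prob_on (half_half P P') [P; P'].
Proof.
  intros HPP'. unfold fs_prob_on, half_half. simpl.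
  split; [|split; [|split]].
  - constructor; [simpl; intros [E|[]]; congruence|].
    constructor; [simpl; tauto | constructor].
  - intros z. repeat destruct excluded_middle_informative; simpl; auto; lra.
  - intros z. repeat destruct excluded_middle_informative; lra.
  - repeat destruct excluded_middle_informative; try congruence; lra.
Qed.

Lemma barycentric_half_half P P' x : P <> P' ->
  let Bm := B (half_half P P') in
  rpow (d Bm x) q + / rpow beta q * ((rpow (d Bm P) q + rpow (d Bm P') q) / 2)
  <= (rpow (d x P) q + rpow (d x P') q) / 2.
Proof.
  intros HPP' Bm. pose proof (proj2 HB _ _ x (half_half_fs_prob P P' HPP')) as H.
  fold Bm in H. simpl in H. unfold half_half in H.
  repeat destruct excluded_middle_informative; try congruence.
  replace ((rpow (d Bm P) q + rpow (d Bm P') q) / 2)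
    with (1 / 2 * rpow (d Bm P) q + (1 / 2 * rpow (d Bm P') q + 0)) by field.
  replace ((rpow (d x P) q + rpow (d x P') q) / 2)
    with (1 / 2 * rpow (d x P) q + (1 / 2 * rpow (d x P') q + 0)) by field.
  exact H.
Qed.

Variables (m L : R) (f : R -> X).
Hypothesis HL : 0 < L.
Hypothesis Hf : forall s t, m - L <= s <= m + L -> m - L <= t <= m + L ->
  d (f s) (f t) = Rabs (s - t).

Lemma segment_dist s t : m - L <= s -> s <= t -> t <= m + L ->
  d (f s) (f t) = t - s /\ d (f t) (f s) = t - s.
Proof.
  intros. rewrite !Hf by lra. rewrite Rabs_minus_sym, Rabs_right by lra. lra.
Qed.

Lemma segment_half_half_ineq k : 1 <= q -> 0 < beta -> 0 < k < L ->
  2 * Rpower L q + 2 * / rpow beta q * Rpower k q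
  <= rpow (L + k) q + rpow (L - k) q.
Proof.
  intros Hq Hbeta Hk. destruct Hd as [Dpos [Dsep [Dsym Dtri]]].
  set (P := f (m - k)). set (P' := f (m + k)).
  set (XL := f (m - L)). set (XR := f (m + L)).
  destruct (segment_dist (m - k) (m + k)) as [dPP' _]; try lra.
  destruct (segment_dist (m - L) (m - k)) as [dLP _]; try lra.
  destruct (segment_dist (m - L) (m + k)) as [dLP' _]; try lra.
  destruct (segment_dist (m - k) (m + L)) as [_ dRP]; try lra.
  destruct (segment_dist (m + k) (m + L)) as [_ dRP']; try lra.
  destruct (segment_dist (m - L) (m + L)) as [dLR _]; try lra.
  fold P P' XL XR in dPP', dLP, dLP', dRP, dRP', dLR.
  assert (HPP' : P <> P').
  { intros E. rewrite E, (proj2 (Dsep P' P') eq_refl) in dPP'. lra. }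
  pose proof (barycentric_half_half P P' XL HPP') as HLe.
  pose proof (barycentric_half_half P P' XR HPP') as HR.
  simpl in HLe, HR. set (Bm := B (half_half P P')) in HLe, HR.
  replace (m + k - (m - L)) with (L + k) in dLP' by ring.
  replace (m - k - (m - L)) with (L - k) in dLP by ring.
  replace (m + L - (m - k)) with (L + k) in dRP by ring.
  replace (m + L - (m + k)) with (L - k) in dRP' by ring.
  rewrite dLP, dLP' in HLe. rewrite dRP, dRP' in HR.
  assert (Hends : 2 * Rpower L q <= rpow (d Bm XL) q + rpow (d Bm XR) q).
  { apply rpow_add_ge_2Rpower; auto.
    pose proof (Dtri XL Bm XR) as Htri. rewrite (Dsym XL Bm) in Htri. lra. }
  assert (Hpair : 2 * Rpower k q <= rpow (d Bm P) q + rpow (d Bm P') q).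
  { apply rpow_add_ge_2Rpower; auto; try lra.
    pose proof (Dtri P Bm P') as Htri. rewrite (Dsym P Bm) in Htri. lra. }
  assert (Hc : 0 <= / rpow beta q).
  { rewrite rpow_Rpower by lra. left. apply Rinv_0_lt_compat, Rpower_pos. }
  pose proof (Rmult_le_compat_l _ _ _ Hc Hpair) as Hpair_c.
  lra.
Qed.

Lemma barycentric_constant_le t : 1 <= q <= 2 -> 0 < beta -> 0 < t < 1 ->
  / rpow beta q <= Rpower t (2 - q).
Proof.
  intros Hq Hbeta Ht.
  pose proof (segment_half_half_ineq (L * t) ltac:(lra) Hbeta ltac:(nra)) as Hseg.
  replace (L + L * t) with (L * (1 + t)) in Hseg by ring.
  replace (L - L * t) with (L * (1 - t)) in Hseg by ring.
  rewrite !rpow_Rpower, <- !Rpower_mult_distr in Hseg by nra.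
  pose proof (Rpower_sym_sum_le t q Ht Hq) as Hsym.
  pose proof (Rpower_pos L q) as HLq. pose proof (Rpower_pos t q) as Htq.
  assert (Ht2 : t ^ 2 = Rpower t q * Rpower t (2 - q)).
  { rewrite <- Rpower_plus, <- Rpower_pow by lra. f_equal. simpl. ring. }
  rewrite rpow_Rpower by lra. set (c := / Rpower beta q) in *.
  assert (Hct : c * Rpower t q <= t ^ 2).
  { assert (Hq1 : 2 * (q - 1) * t ^ 2 <= 2 * t ^ 2) by nra.
    pose proof (Rmult_le_compat_l _ _ _ (Rlt_le _ _ HLq) Hsym).
    pose proof (Rmult_le_compat_l _ _ _ (Rlt_le _ _ HLq) Hq1).
    apply (Rmult_le_reg_l (Rpower L q)); lra. }
  rewrite Ht2 in Hct.
  apply (Rmult_le_reg_r (Rpower t q)); lra.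
Qed.

End Barycentric.

Theorem mainTheorem15 (X : Type) (d : X -> X -> R) (q : R) :
  is_metric d -> 1 <= q -> q_barycentric d q -> has_geodesic_segment d ->
  2 <= q.
Proof.
  intros Hd Hq [beta [Hbeta [B HB]]] [a [b [f [Hab Hf]]]].
  destruct (Rle_or_lt 2 q) as [|Hq2]; [assumption | exfalso].
  set (c := / rpow beta q).
  assert (Hc : 0 < c).
  { unfold c. rewrite rpow_Rpower by lra. apply Rinv_0_lt_compat, Rpower_pos. }
  set (y := Rmin c 1 / 2).
  assert (Hy : 0 < y < 1 /\ y < c).
  { pose proof (Rmin_l c 1). pose proof (Rmin_r c 1).
    assert (0 < Rmin c 1) by (apply Rmin_glb_lt; lra). unfold y; lra. }
  destruct (Rpower_inv_root y (2 - q) (proj1 Hy) ltac:(lra)) as [Ht Hty].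
  pose proof (barycentric_constant_le X d q beta B Hd HB ((a + b) / 2) ((b - a) / 2) f
    ltac:(lra) ltac:(intros s t Hs Ht'; apply Hf; lra) _ ltac:(lra) Hbeta Ht) as Hcy.
  fold c in Hcy. lra.
Qed.
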